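(* Consider any fair, well-formed execution of COP as described in the context, with history $\sigma$ (and $S$ correct or Byzantine). If some client $C_k$ confirms an operation $o_1$ before an operation $o_2$, then $o_2$ does not precede $o_1$ in $\sigma$ (i.e., it is not the case that $o_2$ completes before $o_1$ is invoked).
   Context: System model. Clients $C_1,\dots,C_n$ and server $S$ in an asynchronous system, each client connected to $S$ by a reliable FIFO channel; clients are correct; $S$ is correct or Byzantine (may send arbitrary messages). Executions are fair and well-formed. Functionality. $F$ is deterministic over states $\mathcal{S}$, operations $\mathcal{O}$, responses $\mathcal{R}$: $F(s,o)=(s',r)$, extended to sequences by applying operations in order. $\mathrm{commute}_F(s,\rho_1,\rho_2)$ is true iff every interleaving of sequences $\rho_1,\rho_2$ (preserving each one's internal order) executed from $s$ yields the same final state and the same respective responses. Cryptography (ideal). $\mathrm{hash}$ is ideal collision-free; $\mathrm{sign}_i$ is invocable only by $C_i$ and $\mathrm{verify}_i(\phi,m)$ is true iff $C_i$ previously executed $\mathrm{sign}_i(m)$ obtaining $\phi$. $\|$ is concatenation. COP client $C_i$. State: $u$ (initially $\bot$); $c$ (initially $0$); map $H$ with $H[0]=\mathrm{null}$; map $Z$ to $\{\mathrm{success},\mathrm{abort}\}$; state $s$ (initially $s_0$). (1) On invocation of $o$: $u\leftarrow o$, send $\langle\mathrm{invoke},o,c,\mathrm{sign}_i(\mathrm{invoke}\|o\|i)\rangle$ to $S$. (2) On $\langle\mathrm{reply},\omega\rangle$: $\gamma,\mu\leftarrow\langle\rangle$. For $k=1,\dots,\mathrm{length}(\omega)$: $(o,j,\tau)=\omega[k]$,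 $l=c+k$; halt if $\mathrm{verify}_j(\tau,\mathrm{invoke}\|o\|j)$ fails; if $H[l]$ undefined set $H[l]\leftarrow\mathrm{hash}(H[l-1]\|o\|l\|j)$, else halt if $H[l]\neq\mathrm{hash}(H[l-1]\|o\|l\|j)$; if $j=i$ and $Z[l]=\mathrm{success}$ append $o$ to $\mu$, else if $j\neq i$ append $o$ to $\gamma$. Halt if $\omega$ is empty or its last entry has operation $\neq u$ or index $\neq i$. $(a,r)\leftarrow F(s,\mu)$. If $\mathrm{commute}_F(a,\langle u\rangle,\gamma)$: $(a,r)\leftarrow F(a,u)$, $Z[l]\leftarrow\mathrm{success}$; else $r\leftarrow\bot$, $Z[l]\leftarrow\mathrm{abort}$. Send $\langle\mathrm{commit},u,l,H[l],Z[l],\mathrm{sign}_i(\mathrm{commit}\|u\|l\|H[l]\|Z[l])\rangle$ to $S$, set $u\leftarrow\bot$, output $r$. (3) On $\langle\mathrm{broadcast},o,q,h,z,\phi,j\rangle$: halt unless $q=c+1$ and $\mathrm{verify}_j(\phi,\mathrm{commit}\|o\|q\|h\|z)$; if $H[q]$ undefined set $H[q]\leftarrow\mathrm{hash}(H[q-1]\|o\|q\|j)$; halt if $h\neq H[q]$; if $z=\mathrm{success}$, $(s,\cdot)\leftarrow F(s,o)$; $c\leftarrow c+1$. COP server $S$ (when correct). State $t=0$, $b=0$, maps $I,O$ empty. On $\langle\mathrm{invoke},o,c,\tau\rangle$ from $C_i$: $t\leftarrow t+1$, $I[t]\leftarrow(o,i,\tau)$, send $\langle\mathrm{reply},\langle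 I[c+1],\dots,I[t]\rangle\rangle$ to $C_i$. On $\langle\mathrm{commit},o,q,h,z,\phi\rangle$ from $C_i$: $O[q]\leftarrow(o,h,z,\phi,i)$; while $O[b+1]$ defined: $b\leftarrow b+1$, send $\langle\mathrm{broadcast},o',b,h',z',\phi',j\rangle$ to all clients where $(o',h',z',\phi',j)=O[b]$. Terminology. The history $\sigma$ is the sequence of invocation and response events at the clients; $o$ precedes $o'$ in $\sigma$ if $o$ completes before $o'$ is invoked. A client commits an operation when it issues the commit signature in step (2). A client confirms an operation $o$ when it processes a broadcast message for $o$ in step (3) passing all checks. *)

From HB Require Import structures.
From mathcomp Require Import all_boot.


(* a hypothesis of the theorem.                                        *)
Record cop_params := CopParams {
  nclients : nat;
  Op : eqType;
  St : Type;
  Res : Type;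
  F : St -> Op -> St * Res;
  s0 : St;
  Hash : eqType;
  hnull : Hash;
  hash : Hash -> Op -> nat -> 'I_nclients -> Hash  (* hash(h || o || l || j) *)
}.

Set Implicit Arguments.
Unset Strict Implicit.
Unset Printing Implicit Defensive.

Inductive status := Success | Abort.
Definition status_eqb (a b : status) :=
  match a, b with Success, Success | Abort, Abort => true | _, _ => false end.
Lemma status_eqP : Equality.axiom status_eqb.
Proof. by do 2 case; constructor. Qed.
HB.instance Definition _ := hasDecEq.Build status status_eqP.

Section COP.
Variable P : cop_params.
Local Notation n := (nclients P).
Local Notation Op := (Op P).
Local Notation St := (St P).
Local Notation Res := (Res P).
Local Notation Hash := (Hash P).
Local Notation F := (F P).

Definition Fseq (s : St) (mu : seq Op) : St := foldl (fun s o => (F s o).1) s mu.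

Fixpoint run_inter (s : St) (w : seq (bool * Op)) : St * seq Res * seq Res :=
  match w with
  | [::] => (s, [::], [::])
  | (b, o) :: w' =>
      let sr := F s o in
      let '(s2, r1, r2) := run_inter sr.1 w' in
      if b then (s2, sr.2 :: r1, r2) else (s2, r1, sr.2 :: r2)
  end.

Definition interleaving (w : seq (bool * Op)) (rho1 rho2 : seq Op) : Prop :=
  map snd (filter fst w) = rho1 /\ map snd (filter (fun x => ~~ x.1) w) = rho2.

Definition commuteF (s : St) (rho1 rho2 : seq Op) : Prop :=
  forall w w', interleaving w rho1 rho2 -> interleaving w' rho1 rho2 ->
    run_inter s w = run_inter s w'.

Inductive payload :=
  | PInvoke of Op & 'I_n
  | PCommit of Op & nat & Hash & status.

Definition payload_enc (m : payload) : (Op * 'I_n) + (Op * nat * Hash * status) :=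
  match m with
  | PInvoke o i => inl (o, i)
  | PCommit o l h z => inr (o, l, h, z)
  end.
Definition payload_dec (x : (Op * 'I_n) + (Op * nat * Hash * status)) : payload :=
  match x with
  | inl (o, i) => PInvoke o i
  | inr (o, l, h, z) => PCommit o l h z
  end.
Lemma payload_encK : cancel payload_enc payload_dec. Proof. by case. Qed.
HB.instance Definition _ := Equality.copy payload (can_type payload_encK).

(* sign_j(m) returns the value (j, m); the log records every signing
   action performed by a client. *)
Definition sig := ('I_n * payload)%type.

Definition verify (lg : seq sig) (j : 'I_n) (phi : sig) (m : payload) : bool :=
  (phi == (j, m)) && ((j, m) \in lg).

Inductive smsg :=
  | Reply of seq (Op * 'I_n * sig)
  | Broadcast of Op & nat & Hash & status & sig & 'I_n.

Inductive cmsg :=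
  | MInvoke of Op & nat & sig
  | MCommit of Op & nat & Hash & status & sig.

Record cstate := CState {
  cu : option Op;                 (* u, None = bottom *)
  cc : nat;
  cH : nat -> option Hash;        (* H, None = undefined *)
  cZ : nat -> option status;
  cs : St;
  chalt : bool
}.

Definition cinit : cstate :=
  CState None 0 (fun l => if l == 0 then Some (hnull P) else None)
         (fun _ => None) (s0 P) false.

Definition upd {A : Type} (f : nat -> option A) (l : nat) (v : A) : nat -> option A :=
  fun x => if x == l then Some v else f x.

(* The loop of step (2), processing entries omega[k] with l = c + k
   (the argument [l] is the index of the first entry of [w]).
   None = the client halts; otherwise returns (H, gamma, mu). *)
Fixpoint proc_reply (i : 'I_n) (lg : seq sig) (Z : nat -> option status)
    (H : nat -> option Hash) (l : nat) (w : seq (Op * 'I_n * sig))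
    : option ((nat -> option Hash) * seq Op * seq Op) :=
  match w with
  | [::] => Some (H, [::], [::])
  | (o, j, tau) :: w' =>
      if ~~ verify lg j tau (PInvoke o j) then None else
      match H l.-1 with
      | None => None   (* H[l-1] undefined: cannot occur (H[c] is always defined) *)
      | Some hp =>
        let hl := hash P hp o l j in
        let okH := match H l with Some h => h == hl | None => true end in
        if ~~ okH then None else
        match proc_reply i lg Z (upd H l hl) l.+1 w' with
        | None => None
        | Some (H2, g, m) =>
            if j == i then
              (if Z l == Some Success then Some (H2, g, o :: m) else Some (H2, g, m))
            else Some (H2, o :: g, m)
        end
      end
  end.

Definition reply_checks (i : 'I_n) (lg : seq sig) (c : cstate) (w : seq (Op * 'I_n * sig))
    : option ((nat -> option Hash) * seq Op * seq Op * Op * nat) :=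
  match proc_reply i lg (cZ c) (cH c) (cc c).+1 w with
  | None => None
  | Some (H', g, m) =>
      match rev w with
      | [::] => None
      | (o, j, _) :: _ =>
          if (cu c == Some o) && (j == i) then Some (H', g, m, o, cc c + size w)
          else None
      end
  end.

Definition bcast_checks (lg : seq sig) (c : cstate) (o : Op) (q : nat) (h : Hash)
    (z : status) (phi : sig) (j : 'I_n) : option (nat -> option Hash) :=
  if ~~ ((q == (cc c).+1) && verify lg j phi (PCommit o q h z)) then None else
  let H1 := match cH c q with
            | Some _ => Some (cH c)
            | None => match cH c q.-1 with
                      | Some hp => Some (upd (cH c) q (hash P hp o q j))
                      | None => None
                      end
            end in
  match H1 with
  | None => None
  | Some H1 => if H1 q == Some h then Some H1 else None
  end.

Record gstate := GState {
  gcl : 'I_n -> cstate;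
  glog : seq sig;
  gtoS : 'I_n -> seq cmsg;
  gtoC : 'I_n -> seq smsg
}.

Definition ginit : gstate :=
  GState (fun _ => cinit) [::] (fun _ => [::]) (fun _ => [::]).

Definition updI {A : Type} (f : 'I_n -> A) (i : 'I_n) (v : A) : 'I_n -> A :=
  fun x => if x == i then v else f x.

Inductive label :=
  | LInvoke of 'I_n & Op
  | LRespond of 'I_n & Op & option Res
  | LConfirm of 'I_n & Op & nat & 'I_n   (* C_i confirms o (index q, committed by C_j) *)
  | LInternal.

Inductive step : gstate -> label -> gstate -> Prop :=
  (* (1) invocation; well-formedness: only when no operation is pending *)
  | st_invoke g i o :
      ~~ chalt (gcl g i) -> cu (gcl g i) = None ->
      let c := gcl g i in
      let tau := (i, PInvoke o i) in
      step g (LInvoke i o)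
        (GState (updI (gcl g) i (CState (Some o) (cc c) (cH c) (cZ c) (cs c) false))
                (rcons (glog g) tau)
                (updI (gtoS g) i (rcons (gtoS g i) (MInvoke o (cc c) tau)))
                (gtoC g))
  (* the (possibly Byzantine) server sends an arbitrary message to C_i *)
  | st_server_send g i m :
      step g LInternal
        (GState (gcl g) (glog g) (gtoS g) (updI (gtoC g) i (rcons (gtoC g i) m)))
  | st_server_recv g i m rest :
      gtoS g i = m :: rest ->
      step g LInternal (GState (gcl g) (glog g) (updI (gtoS g) i rest) (gtoC g))
  | st_halted g i m rest :
      gtoC g i = m :: rest -> chalt (gcl g i) ->
      step g LInternal (GState (gcl g) (glog g) (gtoS g) (updI (gtoC g) i rest))
  | st_reply_success g i w rest H' gam mu u l :
      gtoC g i = Reply w :: rest -> ~~ chalt (gcl g i) ->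
      reply_checks i (glog g) (gcl g i) w = Some (H', gam, mu, u, l) ->
      let c := gcl g i in
      let a := Fseq (cs c) mu in
      commuteF a [:: u] gam ->
      let hl := odflt (hnull P) (H' l) in
      let phi := (i, PCommit u l hl Success) in
      step g (LRespond i u (Some (F a u).2))
        (GState (updI (gcl g) i (CState None (cc c) H' (upd (cZ c) l Success) (cs c) false))
                (rcons (glog g) phi)
                (updI (gtoS g) i (rcons (gtoS g i) (MCommit u l hl Success phi)))
                (updI (gtoC g) i rest))
  | st_reply_abort g i w rest H' gam mu u l :
      gtoC g i = Reply w :: rest -> ~~ chalt (gcl g i) ->
      reply_checks i (glog g) (gcl g i) w = Some (H', gam, mu, u, l) ->
      let c := gcl g i in
      let a := Fseq (cs c) mu in
      ~ commuteF a [:: u] gam ->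
      let hl := odflt (hnull P) (H' l) in
      let phi := (i, PCommit u l hl Abort) in
      step g (LRespond i u None)
        (GState (updI (gcl g) i (CState None (cc c) H' (upd (cZ c) l Abort) (cs c) false))
                (rcons (glog g) phi)
                (updI (gtoS g) i (rcons (gtoS g i) (MCommit u l hl Abort phi)))
                (updI (gtoC g) i rest))
  | st_reply_halt g i w rest :
      gtoC g i = Reply w :: rest -> ~~ chalt (gcl g i) ->
      reply_checks i (glog g) (gcl g i) w = None ->
      let c := gcl g i in
      step g LInternal
        (GState (updI (gcl g) i (CState (cu c) (cc c) (cH c) (cZ c) (cs c) true))
                (glog g) (gtoS g) (updI (gtoC g) i rest))
  | st_bcast_ok g i o q h z phi j rest H1 :
      gtoC g i = Broadcast o q h z phi j :: rest -> ~~ chalt (gcl g i) ->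
      bcast_checks (glog g) (gcl g i) o q h z phi j = Some H1 ->
      let c := gcl g i in
      let s' := if z == Success then (F (cs c) o).1 else cs c in
      step g (LConfirm i o q j)
        (GState (updI (gcl g) i (CState (cu c) (cc c).+1 H1 (cZ c) s' false))
                (glog g) (gtoS g) (updI (gtoC g) i rest))
  | st_bcast_halt g i o q h z phi j rest :
      gtoC g i = Broadcast o q h z phi j :: rest -> ~~ chalt (gcl g i) ->
      bcast_checks (glog g) (gcl g i) o q h z phi j = None ->
      let c := gcl g i in
      step g LInternal
        (GState (updI (gcl g) i (CState (cu c) (cc c) (cH c) (cZ c) (cs c) true))
                (glog g) (gtoS g) (updI (gtoC g) i rest)).

Inductive execution : seq label -> gstate -> Prop :=
  | ex_nil : execution [::] ginit
  | ex_step tr g l g' : execution tr g -> step g l g' -> execution (rcons tr l) g'.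

Definition ev (tr : seq label) (t : nat) : label := nth LInternal tr t.

Definition confirms_at (tr : seq label) (t : nat) (k : 'I_n) (o : Op) : Prop :=
  exists q j, ev tr t = LConfirm k o q j.

Definition invoked_at (tr : seq label) (t : nat) (o : Op) : Prop :=
  exists i, ev tr t = LInvoke i o.

Definition completed_at (tr : seq label) (t : nat) (o : Op) : Prop :=
  exists i r, ev tr t = LRespond i o r.

Definition precedes (tr : seq label) (o o' : Op) : Prop :=
  exists t t', t < t' /\ completed_at tr t o /\ invoked_at tr t' o'.

Definition unique_invocations (tr : seq label) : Prop :=
  forall t t' o, invoked_at tr t o -> invoked_at tr t' o -> t = t'.

End COP.

From mathcomp Require Import all_boot.

(* Every commit signature that a client accepts was issued by a client C_j at the
   end of a reply whose hash chain H[1..l] C_j checked; every entry of that chain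
   was invoked before C_j responded. By collision-freeness, two hash chains that
   agree at index q agree at every index below q. When C_k confirms o1 at index
   q1 and later o2 at index q2 > q1, its own chain certifies o1 at q1 and o2 at
   q2, so the chain checked by the committer of o2 also has o1 at q1: o1 was
   invoked before o2 completed. If o2 also completed before o1 was invoked, o2
   would have completed twice, which unique invocations rule out. *)

Section COPSafety.
Set Implicit Arguments.
Unset Strict Implicit.

Variable P : cop_params.
Local Notation n := (nclients P).
Local Notation Op := (Op P).
Local Notation Hash := (Hash P).
Local Notation trace := (seq (label P)).

Lemma ev_size (tr : trace) t : ev tr t <> LInternal P -> t < size tr.
Proof. by rewrite /ev; case: ltnP => // ht; rewrite nth_default. Qed.

Lemma ev_rcons (tr : trace) a t : t < size tr -> ev (rcons tr a) t = ev tr t.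
Proof. by move=> ht; rewrite /ev nth_rcons ht. Qed.

Lemma ev_last (tr : trace) a : ev (rcons tr a) (size tr) = a.
Proof. by rewrite /ev nth_rcons ltnn eqxx. Qed.

Lemma ev_take (tr : trace) m t : t < m -> ev (take m tr) t = ev tr t.
Proof. by move=> ht; rewrite /ev nth_take. Qed.

Lemma take_rcons_le (tr : trace) a s : s <= size tr -> take s (rcons tr a) = take s tr.
Proof. by move=> hs; rewrite -cats1 takel_cat. Qed.

Definition invoked (tr : trace) (o : Op) : Prop := exists t, invoked_at tr t o.

Lemma invoked_rcons (tr : trace) a o : invoked tr o -> invoked (rcons tr a) o.
Proof.
case=> t [i hi]; exists t, i.
by rewrite ev_rcons // ev_size // hi.
Qed.

Lemma invoked_take (tr : trace) m o :
  invoked (take m tr) o -> exists2 t, t < m & invoked_at tr t o.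
Proof.
case=> t [i hi]; have ht : t < size (take m tr) by rewrite ev_size // hi.
have tm : t < m by apply: leq_trans ht _; rewrite size_take; case: ltnP => // /ltnW.
by exists t => //; exists i; rewrite -(ev_take tr tm).
Qed.

Definition hash_chain (Q : Op -> Prop) (H : nat -> option Hash) : Prop :=
  forall m h, 0 < m -> H m = Some h ->
    exists hp o j, [/\ H m.-1 = Some hp, h = hash P hp o m j & Q o].

Definition extends (H H' : nat -> option Hash) : Prop :=
  forall m h, H m = Some h -> H' m = Some h.

Lemma hash_chain_weaken (Q Q' : Op -> Prop) H :
  (forall o, Q o -> Q' o) -> hash_chain Q H -> hash_chain Q' H.
Proof.
move=> QQ' hc m h m0 /(hc _ _ m0) [hp [o [j [h1 h2 /QQ' h3]]]].
by exists hp, o, j.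
Qed.

Lemma extends_upd H l v : (forall h, H l = Some h -> h = v) -> extends H (upd H l v).
Proof. by move=> hl m h hm; rewrite /upd; case: eqP => // e; rewrite -(hl h) // -e. Qed.

Lemma hash_chain_upd (Q : Op -> Prop) H l hp o j :
  0 < l -> hash_chain Q H -> H l.-1 = Some hp -> Q o ->
  (forall h, H l = Some h -> h = hash P hp o l j) ->
  hash_chain Q (upd H l (hash P hp o l j)).
Proof.
move=> l0 hc hl1 Qo hl m h m0; rewrite /upd; case: eqP => [-> [<-]|ml].
  by exists hp, o, j; rewrite ltn_eqF ?ltn_predL.
move=> /(hc _ _ m0) [hp' [o' [j' [h1 h2 h3]]]]; exists hp', o', j'.
by case: eqP => [e|_] //; rewrite -(hl hp') // -h1 e.
Qed.

Definition hash_injective : Prop := forall h o l j h' o' l' j',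
  hash P h o l j = hash P h' o' l' j' -> [/\ h = h', o = o', l = l' & j = j'].

Section CollisionFree.
Hypothesis hash_inj : hash_injective.

Lemma hash_chains_agree (Q1 Q2 : Op -> Prop) A B q h :
  hash_chain Q1 A -> hash_chain Q2 B -> A q = Some h -> B q = Some h ->
  forall m, m <= q -> exists h', A m = Some h' /\ B m = Some h'.
Proof.
move=> cA cB hA hB m /subKn <-; elim: (q - m) (leq_subr m q) => [|d IH] hd.
  by exists h; rewrite subn0.
have [h' [hAd hBd]] := IH (ltnW hd); have qd0 : 0 < q - d by rewrite subn_gt0.
have [hpA [oA [jA [hA1 eA _]]]] := cA _ _ qd0 hAd.
have [hpB [oB [jB [hB1 eB _]]]] := cB _ _ qd0 hBd.
have [ehp _ _ _] := hash_inj (etrans (esym eA) eB).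
by exists hpA; rewrite subnS hA1 hB1 ehp.
Qed.

Lemma hash_chain_op (Q : Op -> Prop) B m hp o j :
  hash_chain Q B -> 0 < m -> B m = Some (hash P hp o m j) -> Q o.
Proof.
move=> cB m0 /(cB _ _ m0) [hp' [o' [j' [_ e Qo']]]].
by have [_ -> _ _] := hash_inj e.
Qed.

End CollisionFree.

Lemma proc_reply_cons i (lg : seq (sig P)) Z (H : nat -> option Hash) l o j tau w H2 gam mu :
  proc_reply i lg Z H l ((o, j, tau) :: w) = Some (H2, gam, mu) ->
  exists hp gam' mu', [/\ (j, PInvoke o j) \in lg, H l.-1 = Some hp,
     (forall h, H l = Some h -> h = hash P hp o l j) &
     proc_reply i lg Z (upd H l (hash P hp o l j)) l.+1 w = Some (H2, gam', mu')].
Proof.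
rewrite /=; case hv: verify => //=; have hin : (j, PInvoke o j) \in lg by case/andP: hv.
case: (H l.-1) => // hp.
case hHl: (H l) => [h'|] /=; first case: eqP => //= eh.
all: case hr: proc_reply => [[[H3 g3] m3]|] // hres; exists hp, g3, m3.
all: have <- : H3 = H2 by move: hres; do 2?case: ifP => _; case.
all: by split => // ? [<-].
Qed.

Lemma proc_reply_extends i (lg : seq (sig P)) Z (H : nat -> option Hash) l w H2 gam mu :
  proc_reply i lg Z H l w = Some (H2, gam, mu) -> extends H H2.
Proof.
elim: w H l gam mu => [|[[o j] tau] w IH] H l gam mu; first by case=> <- _ _ ? ?.
case/proc_reply_cons=> [hp [g3 [m3 [_ _ hl /IH ext]]]] m h /(extends_upd hl).
exact: ext.
Qed.

Definition sig_op (m : payload P) : Op :=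
  match m with PInvoke o _ => o | PCommit o _ _ _ => o end.

Lemma proc_reply_chain (Q : Op -> Prop) i (lg : seq (sig P)) Z (H : nat -> option Hash)
    l w H2 gam mu :
  0 < l -> (forall x, x \in lg -> Q (sig_op x.2)) -> hash_chain Q H ->
  proc_reply i lg Z H l w = Some (H2, gam, mu) -> hash_chain Q H2.
Proof.
move=> + Qlg; elim: w H l gam mu => [|[[o j] tau] w IH] H l gam mu l0 hc.
  by case=> <-.
case/proc_reply_cons=> [hp [g3 [m3 [/Qlg Qo hl1 hl /IH]]]]; apply=> //.
exact: hash_chain_upd.
Qed.

Lemma proc_reply_last i (lg : seq (sig P)) Z (H : nat -> option Hash) l w x H2 gam mu :
  proc_reply i lg Z H l (rcons w x) = Some (H2, gam, mu) ->
  exists hp, H2 (l + size w) = Some (hash P hp x.1.1 (l + size w) x.1.2).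
Proof.
elim: w H l gam mu => [|[[o j] tau] w IH] H l gam mu.
  case: x => [[o j] tau] /proc_reply_cons [hp [g3 [m3 [_ _ _ [<- _ _]]]]].
  by exists hp; rewrite addn0 /upd eqxx.
rewrite rcons_cons => /proc_reply_cons [hp [g3 [m3 [_ _ _ /IH]]]].
by rewrite /= addnS -addSn.
Qed.

Lemma reply_checks_spec i (lg : seq (sig P)) (c : cstate P) w H' gam mu u l :
  reply_checks i lg c w = Some (H', gam, mu, u, l) ->
  exists gam' mu', [/\ proc_reply i lg (cZ c) (cH c) (cc c).+1 w = Some (H', gam', mu'),
     cu c = Some u & exists hp, H' l = Some (hash P hp u l i)].
Proof.
rewrite /reply_checks; case hr: proc_reply => [[[H2 g2] m2]|] //.
case: (lastP w) hr => [|w' [[o j] tau]] hr //; rewrite rev_rcons.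
case: andP => // [[/eqP hu /eqP hj]] [<- _ _ <- <-]; exists g2, m2; split => //.
by rewrite size_rcons addnS -addSn -hj; apply: proc_reply_last hr.
Qed.

Lemma bcast_checks_spec (lg : seq (sig P)) (c : cstate P) o q h z phi j H1 :
  bcast_checks lg c o q h z phi j = Some H1 ->
  [/\ q = (cc c).+1, (j, PCommit o q h z) \in lg, H1 q = Some h & extends (cH c) H1].
Proof.
rewrite /bcast_checks; case: eqP => //= hq; case hv: verify => //=.
have hin : (j, PCommit o q h z) \in lg by case/andP: hv.
case hHq: (cH c q) => [h0|] /=; first by case: eqP => // e [<-]; split => // ? ?.
case: (cH c q.-1) => [hp|] //; case: eqP => // e [<-].
by split => //; apply: extends_upd; rewrite hHq.
Qed.

Lemma bcast_checks_chain (Q : Op -> Prop) (lg : seq (sig P)) (c : cstate P) o q h z phi j H1 :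
  bcast_checks lg c o q h z phi j = Some H1 ->
  hash_chain Q (cH c) -> Q o -> hash_chain Q H1.
Proof.
rewrite /bcast_checks; case: eqP => //= hq; case: verify => //=.
case hHq: (cH c q) => [h0|] /=; first by case: eqP => // e [<-].
case hp: (cH c q.-1) => [hp0|] //; case: eqP => // e [<-] hc Qo.
by apply: hash_chain_upd; rewrite ?hHq // hq.
Qed.

Definition response_free (tr : trace) (i : 'I_n) (x s : nat) : Prop :=
  forall y, x < y -> y < s -> forall o r, ev tr y <> LRespond i o r.

Definition open_invocation (tr : trace) (i : 'I_n) (o : Op) (s : nat) : Prop :=
  exists x, [/\ x < s, ev tr x = LInvoke i o & response_free tr i x s].

Lemma open_invocation_rcons (tr : trace) a i o s :
  s <= size tr -> open_invocation tr i o s -> open_invocation (rcons tr a) i o s.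
Proof.
move=> hs [x [xs ex nr]]; exists x; split => //; first by rewrite ev_rcons ?(leq_trans xs).
by move=> y xy ys; rewrite ev_rcons; [apply: nr | apply: leq_trans ys hs].
Qed.

Lemma open_invocation_step (tr : trace) a i o :
  (forall o' r, a <> LRespond i o' r) ->
  open_invocation tr i o (size tr) -> open_invocation (rcons tr a) i o (size tr).+1.
Proof.
move=> na [x [xs ex nr]]; exists x; split; [exact: ltnW | by rewrite ev_rcons |].
move=> y xy; rewrite ltnS leq_eqVlt => /predU1P [->|ys]; first by rewrite ev_last.
by rewrite ev_rcons //; apply: nr.
Qed.

Lemma open_invocation_new (tr : trace) i o :
  open_invocation (rcons tr (LInvoke i o)) i o (size tr).+1.
Proof.
exists (size tr); split; rewrite ?ev_last // => y xy.
by rewrite ltnS leqNgt xy.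
Qed.

Definition commit_witnessed (tr : trace) (j : 'I_n) (o : Op) (l : nat) (h : Hash) : Prop :=
  exists s, [/\ exists r, ev tr s = LRespond j o r,
    exists hp, h = hash P hp o l j &
    exists2 B, B l = Some h & hash_chain (invoked (take s tr)) B].

Lemma commit_witnessed_rcons (tr : trace) a j o l h :
  commit_witnessed tr j o l h -> commit_witnessed (rcons tr a) j o l h.
Proof.
case=> s [[r er] hh [B hB cB]]; have hs : s < size tr by rewrite ev_size // er.
exists s; split => //; first by exists r; rewrite ev_rcons.
by exists B; rewrite // take_rcons_le // ltnW.
Qed.

Record cop_inv (tr : trace) (g : gstate P) : Prop := {
  inv_chain : forall i, hash_chain (invoked tr) (cH (gcl g i));
  inv_log : forall x, x \in glog g -> invoked tr (sig_op x.2);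
  inv_pending : forall i o, cu (gcl g i) = Some o -> open_invocation tr i o (size tr);
  inv_response : forall s i o r, ev tr s = LRespond i o r -> open_invocation tr i o s;
  inv_commit : forall j o l h z, (j, PCommit o l h z) \in glog g ->
    commit_witnessed tr j o l h
}.

Lemma inv_response_rcons (tr : trace) g a :
  cop_inv tr g -> (forall i o r, a = LRespond i o r -> open_invocation tr i o (size tr)) ->
  forall s i o r, ev (rcons tr a) s = LRespond i o r -> open_invocation (rcons tr a) i o s.
Proof.
move=> hI ha s i o r er; have : s < size (rcons tr a) by rewrite ev_size // er.
rewrite size_rcons ltnS leq_eqVlt => /predU1P [es|hs].
  by move: er; rewrite es ev_last => /ha; apply: open_invocation_rcons.
move: er; rewrite ev_rcons // => /(inv_response hI).
by apply: open_invocation_rcons; exact: ltnW.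
Qed.

Lemma cop_inv_quiet (tr : trace) g g' a :
  cop_inv tr g -> glog g' = glog g -> (forall i, cu (gcl g' i) = cu (gcl g i)) ->
  (forall i o r, a <> LRespond i o r) ->
  (forall i, hash_chain (invoked tr) (cH (gcl g' i))) -> cop_inv (rcons tr a) g'.
Proof.
move=> hI el eu na ec; split.
- by move=> i; apply: hash_chain_weaken (ec i) => o; apply: invoked_rcons.
- by move=> x; rewrite el => /(inv_log hI); apply: invoked_rcons.
- by move=> i o; rewrite eu size_rcons => /(inv_pending hI); apply: open_invocation_step.
- by apply: (inv_response_rcons hI) => i o r e; case: (na i o r).
- by move=> j o l h z; rewrite el => /(inv_commit hI); apply: commit_witnessed_rcons.
Qed.

Lemma cop_inv_reply (tr : trace) g i w H' gam mu u l z r cst toS toC :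
  cop_inv tr g -> reply_checks i (glog g) (gcl g i) w = Some (H', gam, mu, u, l) ->
  cu cst = None -> cH cst = H' ->
  cop_inv (rcons tr (LRespond i u r))
    (GState (updI (gcl g) i cst)
       (rcons (glog g) (i, PCommit u l (odflt (hnull P) (H' l)) z)) toS toC).
Proof.
move=> hI hres hcu hcH; have [gam' [mu' [hr hu [hp hl]]]] := reply_checks_spec hres.
have cH' : hash_chain (invoked tr) H'.
  exact: proc_reply_chain (ltn0Sn _) (@inv_log _ _ hI) (@inv_chain _ _ hI i) hr.
have pend := inv_pending hI hu.
have up o : invoked tr o -> invoked (rcons tr (LRespond i u r)) o by apply: invoked_rcons.
split => /=.
- move=> x; rewrite /updI; case: eqP => _; apply: hash_chain_weaken up _ => //.
  + by rewrite hcH.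
  + exact: inv_chain.
- move=> x; rewrite mem_rcons inE => /predU1P [-> /=|/(inv_log hI)/up //].
  by case: pend => y [_ ey _]; apply: up; exists y, i.
- move=> x o; rewrite /updI; case: eqP => [_|ne]; first by rewrite hcu.
  move/(inv_pending hI); rewrite size_rcons; apply: open_invocation_step.
  by move=> o' r' [/esym].
- by apply: (inv_response_rcons hI) => i' o' r' [<- <- _].
- move=> j o l' h z'; rewrite mem_rcons inE.
  case/predU1P => [[-> -> -> -> _]|/(inv_commit hI)/commit_witnessed_rcons //].
  exists (size tr); rewrite ev_last hl; split.
  + by exists r.
  + by exists hp.
  + by exists H'; rewrite // take_rcons_le // take_size.
Qed.

Lemma cop_inv_step (tr : trace) g a g' :
  cop_inv tr g -> step g a g' -> cop_inv (rcons tr a) g'.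
Proof.
move=> + hs; case: hs => {g a g'}.
- move=> g i o _ hu c tau hI; case: (hI) => hc hlog hpend _ hcom.
  have inv_new : invoked (rcons tr (LInvoke i o)) o by exists (size tr), i; rewrite ev_last.
  split => /=.
  + move=> x; rewrite /updI; case: eqP => _; apply: hash_chain_weaken (hc _) => ?;
      exact: invoked_rcons.
  + move=> x; rewrite mem_rcons inE => /predU1P [-> //|/hlog]; exact: invoked_rcons.
  + move=> x o'; rewrite /updI size_rcons; case: eqP => [-> [<-]|ne].
      exact: open_invocation_new.
    by move/hpend; apply: open_invocation_step.
  + by apply: (inv_response_rcons hI).
  + move=> j o' l h z; rewrite mem_rcons inE => /predU1P [[] //|/hcom].
    exact: commit_witnessed_rcons.
- by move=> g i m hI; apply: (cop_inv_quiet hI) => //= x; apply: inv_chain.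
- by move=> g i m rest _ hI; apply: (cop_inv_quiet hI) => //= x; apply: inv_chain.
- by move=> g i m rest _ _ hI; apply: (cop_inv_quiet hI) => //= x; apply: inv_chain.
- by move=> g i w rest H' gam mu u l _ _ hres ? ? _ ? ? hI; apply: cop_inv_reply hI hres _ _.
- by move=> g i w rest H' gam mu u l _ _ hres ? ? _ ? ? hI; apply: cop_inv_reply hI hres _ _.
- move=> g i w rest _ _ _ c hI; apply: (cop_inv_quiet hI) => //= x;
    by rewrite /updI /c; case: eqP => [e|_]; rewrite ?e //; apply: inv_chain.
- move=> g i o q h z phi j rest H1 _ _ hb c s' hI; apply: (cop_inv_quiet hI) => //= x.
    by rewrite /updI /c; case: eqP => [e|_]; rewrite ?e.
  rewrite /updI; case: eqP => [_ /=|_]; last exact: inv_chain.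
  have [_ hin _ _] := bcast_checks_spec hb.
  by apply: bcast_checks_chain hb _ _; [exact: inv_chain | exact: (@inv_log _ _ hI _ hin)].
- move=> g i o q h z phi j rest _ _ _ c hI; apply: (cop_inv_quiet hI) => //= x;
    by rewrite /updI /c; case: eqP => [e|_]; rewrite ?e //; apply: inv_chain.
Qed.

Lemma cop_inv_exec (tr : trace) g : execution tr g -> cop_inv tr g.
Proof.
elim=> [|tr' g0 a g1 _ hI hs]; last exact: cop_inv_step hI hs.
by split=> //= [i m h m0 | s i o r]; rewrite ?eqn0Ngt ?m0 // /ev nth_nil.
Qed.

Lemma no_second_response (tr : trace) g s s' i i' o r r' :
  cop_inv tr g -> unique_invocations tr -> s < s' ->
  ev tr s = LRespond i o r -> ev tr s' = LRespond i' o r' -> False.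
Proof.
move=> hI huniq ss' es es'.
have [x [xs ex _]] := inv_response hI es.
have [x' [_ ex' nr]] := inv_response hI es'.
have exx' : x = x' by apply: (huniq _ _ o); [exists i | exists i'].
move: ex'; rewrite -exx' ex => -[eii'].
by apply: (nr s _ ss' o r); rewrite -?exx' -?eii'.
Qed.

Inductive steps : gstate P -> gstate P -> Prop :=
  | steps_refl g : steps g g
  | steps_snoc g g1 a g2 : steps g g1 -> step g1 a g2 -> steps g g2.

Lemma execution_split (tr : trace) g t :
  execution tr g -> t < size tr -> exists g0 g1,
  [/\ execution (take t tr) g0, step g0 (ev tr t) g1 & steps g1 g].
Proof.
elim=> [|tr' g0 a g1 hex IH hs] //; rewrite size_rcons ltnS leq_eqVlt.
case/predU1P => [->|ht].
  by exists g0, g1; rewrite take_rcons_le // take_size ev_last; split => //; constructor.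
have [x0 [x1 [h0 h1 h2]]] := IH ht; exists x0, x1.
rewrite take_rcons_le ?(ltnW ht) // ev_rcons //; split => //; exact: steps_snoc h2 hs.
Qed.

Lemma step_client_mono (g g' : gstate P) a i :
  step g a g' -> cc (gcl g i) <= cc (gcl g' i) /\ extends (cH (gcl g i)) (cH (gcl g' i)).
Proof.
have unchanged (c : cstate P) : cc c <= cc c /\ extends (cH c) (cH c) by split => // ? ?.
case=> {g a g'} g i'.
- by move=> o _ _ c _ /=; rewrite /updI; case: eqP => [->|_]; apply: unchanged.
- by move=> m; apply: unchanged.
- by move=> m rest _; apply: unchanged.
- by move=> m rest _ _; apply: unchanged.
- move=> w rest H' gam mu u l _ _ hres c a _ hl phi /=.
  rewrite /updI; case: eqP => [->|_]; last exact: unchanged.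
  have [? [? [hr _ _]]] := reply_checks_spec hres; split => //; exact: proc_reply_extends hr.
- move=> w rest H' gam mu u l _ _ hres c a _ hl phi /=.
  rewrite /updI; case: eqP => [->|_]; last exact: unchanged.
  have [? [? [hr _ _]]] := reply_checks_spec hres; split => //; exact: proc_reply_extends hr.
- by move=> w rest _ _ _ c /=; rewrite /updI; case: eqP => [->|_]; apply: unchanged.
- move=> o q h z phi j rest H1 _ _ hb c s' /=.
  rewrite /updI; case: eqP => [->|_]; last exact: unchanged.
  by have [_ _ _ ext] := bcast_checks_spec hb; split.
- by move=> o q h z phi j rest _ _ _ c /=; rewrite /updI; case: eqP => [->|_]; apply: unchanged.
Qed.

Lemma steps_client_mono (g g' : gstate P) i :
  steps g g' -> cc (gcl g i) <= cc (gcl g' i) /\ extends (cH (gcl g i)) (cH (gcl g' i)).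
Proof.
elim=> [g0|g0 g1 a g2 _ [cc01 ext01] /(step_client_mono i) [cc12 ext12]].
  by split => // ? ?.
by split => [|m h /ext01 /ext12 //]; apply: leq_trans cc12.
Qed.

Lemma step_confirm_inv (g g' : gstate P) i o q j :
  step g (LConfirm i o q j) g' -> exists h z phi H1,
  [/\ bcast_checks (glog g) (gcl g i) o q h z phi j = Some H1,
      cc (gcl g' i) = (cc (gcl g i)).+1 & cH (gcl g' i) = H1].
Proof.
move e: (LConfirm i o q j) => a hs.
case: hs e => // g0 i0 o0 q0 h z phi j0 rest H1 _ _ hb c s'.
by case=> -> -> -> ->; exists h, z, phi, H1; rewrite /= /updI eqxx.
Qed.

Lemma confirmed_later_completes_after_invocation (tr : trace) g k o1 o2 t1 t2 :
  hash_injective -> execution tr g -> t1 < t2 ->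
  confirms_at tr t1 k o1 -> confirms_at tr t2 k o2 ->
  exists s x, [/\ x < s, (exists i r, ev tr s = LRespond i o2 r) & invoked_at tr x o1].
Proof.
move=> hinj hex t12 [q1 [j1 e1]] [q2 [j2 e2]].
have t2s : t2 < size tr by rewrite ev_size // e2.
have [g0b [g1b [ex0b st2 _]]] := execution_split hex t2s.
have t1s : t1 < size (take t2 tr) by rewrite size_take t2s.
have [g0a [g1a [ex0a st1 steps12]]] := execution_split ex0b t1s.
rewrite ev_take // e1 in st1; rewrite e2 in st2.
have [h1 [z1 [phi1 [Ha [hba cca cHa]]]]] := step_confirm_inv st1.
have [hq1 hin1 hHa1 _] := bcast_checks_spec hba.
have [h2 [z2 [phi2 [Hb [hbb _ cHb]]]]] := step_confirm_inv st2.
have [hq2 hin2 hHb2 extb] := bcast_checks_spec hbb.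
have [cc12 ext12] := steps_client_mono k steps12.
have q12 : q1 <= q2 by rewrite hq1 hq2 ltnS ltnW // -cca.
have hHb1 : Hb q1 = Some h1 by apply/extb/ext12; rewrite cHa.
have chainb : hash_chain (invoked (rcons (take t2 tr) (LConfirm k o2 q2 j2))) Hb.
  by rewrite -cHb; apply: inv_chain (cop_inv_step (cop_inv_exec ex0b) st2) k.
have [s [[r es] _ [B hB chainB]]] := inv_commit (cop_inv_exec ex0b) hin2.
have [_ [_ [hp1 eh1] _]] := inv_commit (cop_inv_exec ex0a) hin1.
have [h' [hHbq1 hBq1]] := hash_chains_agree hinj chainb chainB hHb2 hB q12.
have {h' hHbq1} hBq1 : B q1 = Some (hash P hp1 o1 q1 j1).
  by move: hHbq1; rewrite hBq1 hHb1 -eh1 => -[->].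
have st2' : s < t2 by rewrite -[t2](size_takel (ltnW t2s)) ev_size // es.
have q1pos : 0 < q1 by rewrite hq1.
have [x xs invx] := invoked_take (hash_chain_op hinj chainB q1pos hBq1).
exists s, x; split => //; first by exists j2, r; rewrite -(ev_take tr st2').
by case: invx => i ei; exists i; rewrite -(ev_take tr (ltn_trans xs st2')).
Qed.

End COPSafety.

Theorem lemma4 (P : cop_params)
  (hash_collision_free : forall h o l j h' o' l' j',
      hash P h o l j = hash P h' o' l' j' -> [/\ h = h', o = o', l = l' & j = j'])
  (tr : seq (label P)) (g : gstate P) (Hexec : execution tr g)
  (Huniq : unique_invocations tr)
  (k : 'I_(nclients P)) (o1 o2 : Op P) (t1 t2 : nat) :
  t1 < t2 -> confirms_at tr t1 k o1 -> confirms_at tr t2 k o2 ->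
  ~ precedes tr o2 o1.
Proof.
move=> t12 conf1 conf2 [t [t' [tt' [[i [r er]] inv1]]]].
have [s [x [xs [i' [r' es]] invx]]] :=
  confirmed_later_completes_after_invocation hash_collision_free Hexec t12 conf1 conf2.
have ext' : x = t' by apply: Huniq invx inv1.
apply: (no_second_response (cop_inv_exec Hexec) Huniq _ er es).
by apply: ltn_trans tt' _; rewrite -ext'.
Qed.
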